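(* Let $m\neq 0$ and $k$ be real constants, let $\mathbf{q}_0,\mathbf{p}_0\in\mathbb{R}^3$ with $\mathbf{q}_0\neq 0$, and let $h_0>0$. Run the numerical scheme described in the context and assume that all quantities it produces are well defined for every $n\ge 0$ (all denominators nonzero). Then the discrete angular momentum $\mathbf L_n=\mathbf q_n\times\mathbf p_n$ is independent of $n$: $\mathbf L_n=\mathbf q_0\times\mathbf p_0$ for all $n\ge 0$.
   Context: The scheme is a discretization of the Kepler problem $\dot{\mathbf p}=-k\mathbf q/|\mathbf q|^3$, $\mathbf p=m\dot{\mathbf q}$ in $\mathbb{R}^3$. For a vector $\mathbf v$ write $v=|\mathbf v|$. Initialization: put $q_0=|\mathbf q_0|$, $$S_0=\frac{h_0\,\mathbf q_0\cdot\mathbf p_0}{m\,q_0},\qquad \mathbf r_0=\mathbf q_0+\frac{h_0}{2m}\Big(\frac{S_0}{q_0+\sqrt{q_0^2+S_0^2}}-1\Big)\mathbf p_0,\qquad \mathbf r_1=\mathbf r_0+\frac{h_0\mathbf p_0}{m},$$ and let $\delta\in[0,\pi/2)$ be defined by $\cos 2\delta=\dfrac{r_0^2+\mathbf r_0\cdot\mathbf P_0}{r_0\sqrt{r_0^2+2\mathbf r_0\cdot\mathbf P_0+\mathbf P_0^2}}$, where $\mathbf P_0=h_0\mathbf p_0/m$ (equivalently $\cos2\delta=\mathbf r_0\cdot\mathbf r_1/(r_0r_1)$). Iteration: for $n=0,1,2,\dots$, given $\mathbf r_n,\mathbf r_{n+1},\mathbf p_n,h_n$, define $$\mathbf p_{n+1}=\mathbf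 p_n-\frac{k h_n\,\mathbf r_{n+1}}{r_{n+1}^2 r_n\cos\delta},\qquad h_{n+1}=\frac{h_n}{\dfrac{2r_n\cos2\delta}{r_{n+1}}-1+\dfrac{k h_n^2}{m\,r_{n+1}^2 r_n\cos\delta}},$$ $$\mathbf r_{n+2}=\mathbf r_{n+1}+\frac{h_{n+1}\mathbf p_{n+1}}{m},\qquad \mathbf q_{n+1}=\frac{r_{n+2}\mathbf r_{n+1}+r_{n+1}\mathbf r_{n+2}}{r_{n+1}+r_{n+2}} .$$ The initial $\mathbf q_0$ is the given one. *)

From HB Require Import structures.
From mathcomp Require Import all_boot all_order all_algebra.
From mathcomp Require Import reals trigo.
Set Implicit Arguments. Unset Strict Implicit. Unset Printing Implicit Defensive.
Import Order.TTheory GRing.Theory Num.Theory.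
Local Open Scope ring_scope.

Section Vec3.
Variable R : realType.

Definition dotp (u v : 'rV[R]_3) : R := \sum_(i < 3) u 0 i * v 0 i.

Definition vnorm (v : 'rV[R]_3) : R := Num.sqrt (dotp v v).

Definition crossp (u v : 'rV[R]_3) : 'rV[R]_3 :=
  let c i := u 0 (@inord 2 i) in
  let d i := v 0 (@inord 2 i) in
  \row_(i < 3) nth 0 [:: c 1%N * d 2%N - c 2%N * d 1%N;
                        c 2%N * d 0%N - c 0%N * d 2%N;
                        c 0%N * d 1%N - c 1%N * d 0%N] i.
End Vec3.

From HB Require Import structures.
From mathcomp Require Import all_boot all_order all_algebra.
From mathcomp Require Import reals trigo.
From mathcomp Require Import ring.
Set Implicit Arguments. Unset Strict Implicit. Unset Printing Implicit Defensive.
Import Order.TTheory GRing.Theory Num.Theory.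
Local Open Scope ring_scope.

(* The drift r_(n+1) = r_n + (h_n/m) p_n moves r along p and the kick changes p
   by a multiple of r_(n+1), so neither step changes r_n x p_n; moreover
   r_0 - q_0 is a multiple of p_0.  The output point q_(n+1) is an affine
   combination of r_(n+1) and r_(n+2) = r_(n+1) + (h_(n+1)/m) p_(n+1), which have
   the same cross product with p_(n+1); hence q_n x p_n = r_n x p_n = q_0 x p_0. *)

Section CrossProduct.
Variable R : realType.
Implicit Types (u v w : 'rV[R]_3) (a x y : R).

Lemma crosspC u v : crossp u v = - crossp v u.
Proof.
by apply/rowP => -[[|[|[|i]]] ?] //=; rewrite !mxE /=; ring.
Qed.

Lemma crosspDl u v w : crossp (u + v) w = crossp u w + crossp v w.
Proof.
by apply/rowP => -[[|[|[|i]]] ?] //=; rewrite !mxE /=; ring.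
Qed.

Lemma crosspZl a u w : crossp (a *: u) w = a *: crossp u w.
Proof.
by apply/rowP => -[[|[|[|i]]] ?] //=; rewrite !mxE /=; ring.
Qed.

Lemma crosspvv u : crossp u u = 0.
Proof.
by apply/rowP => -[[|[|[|i]]] ?] //=; rewrite !mxE /=; ring.
Qed.

Lemma crossp_addZl a u w : crossp (u + a *: w) w = crossp u w.
Proof. by rewrite crosspDl crosspZl crosspvv scaler0 addr0. Qed.

Lemma crossp_subZr a u w : crossp u (w - a *: u) = crossp u w.
Proof. by rewrite crosspC -scaleNr crossp_addZl -crosspC. Qed.

Lemma crossp_affine x y u v w :
  x + y != 0 -> crossp v w = crossp u w ->
  crossp ((x + y)^-1 *: (y *: u + x *: v)) w = crossp u w.
Proof.
move=> xy_neq0 vw_eq.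
by rewrite crosspZl crosspDl !crosspZl vw_eq -scalerDl scalerA [y + x]addrC
  mulVf // scale1r.
Qed.

Lemma leapfrog_crossp_const (r p : nat -> 'rV[R]_3) (c a : nat -> R) :
  (forall n, r n.+1 = r n + c n *: p n) ->
  (forall n, p n.+1 = p n - a n *: r n.+1) ->
  forall n, crossp (r n) (p n) = crossp (r 0%N) (p 0%N).
Proof.
move=> drift kick; elim=> [//|n IHn].
by rewrite kick crossp_subZr drift crossp_addZl IHn.
Qed.

End CrossProduct.

Theorem mainTheorem2 (R : realType) (m k h0 : R) (q0 p0 : 'rV[R]_3)
  (delta : R) (r p q : nat -> 'rV[R]_3) (h : nat -> R) :
  m != 0 -> q0 != 0 -> 0 < h0 ->
  (* initialization *)
  let nq0 := vnorm q0 in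
  let S0 := h0 * dotp q0 p0 / (m * nq0) in
  let P0 := (h0 / m) *: p0 in
  nq0 + Num.sqrt (nq0 ^+ 2 + S0 ^+ 2) != 0 ->
  r 0%N = q0 + (h0 / (2 * m) * (S0 / (nq0 + Num.sqrt (nq0 ^+ 2 + S0 ^+ 2)) - 1)) *: p0 ->
  r 1%N = r 0%N + (h0 / m) *: p0 ->
  vnorm (r 0%N) * Num.sqrt (vnorm (r 0%N) ^+ 2 + 2 * dotp (r 0%N) P0 + vnorm P0 ^+ 2) != 0 ->
  0 <= delta < pi / 2 ->
  cos (2 * delta) = (vnorm (r 0%N) ^+ 2 + dotp (r 0%N) P0) /
      (vnorm (r 0%N) * Num.sqrt (vnorm (r 0%N) ^+ 2 + 2 * dotp (r 0%N) P0 + vnorm P0 ^+ 2)) ->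
  p 0%N = p0 -> h 0%N = h0 -> q 0%N = q0 ->
  (* all denominators of the iteration are nonzero *)
  (forall n : nat,
      [/\ vnorm (r n.+1) ^+ 2 * vnorm (r n) * cos delta != 0,
          vnorm (r n.+1) != 0,
          2 * vnorm (r n) * cos (2 * delta) / vnorm (r n.+1) - 1
            + k * h n ^+ 2 / (m * vnorm (r n.+1) ^+ 2 * vnorm (r n) * cos delta) != 0
        & vnorm (r n.+1) + vnorm (r n.+2) != 0]) ->
  (* iteration *)
  (forall n : nat,
      p n.+1 = p n - (k * h n / (vnorm (r n.+1) ^+ 2 * vnorm (r n) * cos delta)) *: r n.+1) ->
  (forall n : nat,
      h n.+1 = h n / (2 * vnorm (r n) * cos (2 * delta) / vnorm (r n.+1) - 1
                      + k * h n ^+ 2 / (m * vnorm (r n.+1) ^+ 2 * vnorm (r n) * cos delta))) ->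
  (forall n : nat, r n.+2 = r n.+1 + (h n.+1 / m) *: p n.+1) ->
  (forall n : nat,
      q n.+1 = (vnorm (r n.+1) + vnorm (r n.+2))^-1 *:
                 (vnorm (r n.+2) *: r n.+1 + vnorm (r n.+1) *: r n.+2)) ->
  forall n : nat, crossp (q n) (p n) = crossp q0 p0.
Proof.
move=> _ _ _ nq0 S0 P0 _ r0_def r1_def _ _ _ p0_def h0_def q0_def
  denoms kick _ r_rec q_rec.
have drift n : r n.+1 = r n + (h n / m) *: p n.
  by case: n => [|n]; [rewrite r1_def p0_def h0_def | exact: r_rec].
have rp_const n : crossp (r n) (p n) = crossp q0 p0.
  by rewrite (leapfrog_crossp_const drift kick) r0_def p0_def crossp_addZl.
case=> [|n]; first by rewrite q0_def p0_def.
have [_ _ _ norms_neq0] := denoms n.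
have drift_next : crossp (r n.+2) (p n.+1) = crossp (r n.+1) (p n.+1).
  by rewrite r_rec crossp_addZl.
by rewrite q_rec (crossp_affine norms_neq0 drift_next) rp_const.
Qed.
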